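(* Let $\mathbf{b}\in H_{1,2,2}$ have odd norm $N(\mathbf{b})$. Then there is a unit $\mathbf{u}$ of $H_{1,2,2}$ with $\mathbf{b}-\mathbf{u}\in 2H_{1,2,2}$.
   Context: Let $\mathbf{i},\mathbf{j},\mathbf{k}$ be the standard quaternion units; $\overline{\mathbf{q}}$ is quaternion conjugation and $N(\mathbf{q})=\mathbf{q}\overline{\mathbf{q}}$. $H_{1,2,2}$ is the subring of the quaternions equal to the $\mathbb{Z}$-module generated by $\mathbf{v}_1=1$, $\mathbf{v}_2=\mathbf{i}$, $\mathbf{v}_3=\tfrac12(1+\mathbf{i}+\sqrt2\,\mathbf{j})$, $\mathbf{v}_4=\tfrac12(1+\mathbf{i}+\sqrt2\,\mathbf{k})$. A unit of $H_{1,2,2}$ is an element invertible in $H_{1,2,2}$ (equivalently, an element of norm $1$). *)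

From HB Require Import structures.
From mathcomp Require Import all_boot all_order all_algebra.
Set Implicit Arguments. Unset Strict Implicit. Unset Printing Implicit Defensive.
Import Order.TTheory GRing.Theory Num.Theory.
Local Open Scope ring_scope.

Section Quat.
Variable R : rcfType.

(* q = x0 + x1 i + x2 j + x3 k *)
Record quat := Quat { q0 : R; q1 : R; q2 : R; q3 : R }.

Definition qadd (p q : quat) : quat :=
  Quat (q0 p + q0 q) (q1 p + q1 q) (q2 p + q2 q) (q3 p + q3 q).
Definition qopp (p : quat) : quat := Quat (- q0 p) (- q1 p) (- q2 p) (- q3 p).
Definition qsub (p q : quat) : quat := qadd p (qopp q).
(* Hamilton product: i^2 = j^2 = k^2 = ijk = -1 *)
Definition qmul (p q : quat) : quat :=
  Quat (q0 p * q0 q - q1 p * q1 q - q2 p * q2 q - q3 p * q3 q)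
       (q0 p * q1 q + q1 p * q0 q + q2 p * q3 q - q3 p * q2 q)
       (q0 p * q2 q - q1 p * q3 q + q2 p * q0 q + q3 p * q1 q)
       (q0 p * q3 q + q1 p * q2 q - q2 p * q1 q + q3 p * q0 q).
Definition qreal (r : R) : quat := Quat r 0 0 0.
Definition qone : quat := qreal 1.
Definition qi : quat := Quat 0 1 0 0.
Definition qj : quat := Quat 0 0 1 0.
Definition qk : quat := Quat 0 0 0 1.
Definition qconj (p : quat) : quat := Quat (q0 p) (- q1 p) (- q2 p) (- q3 p).
Definition qN (p : quat) : quat := qmul p (qconj p).
Definition qzscale (z : int) (p : quat) : quat := qmul (qreal z%:~R) p.

Definition v1 : quat := qone.
Definition v2 : quat := qi.
Definition v3 : quat :=
  qmul (qreal (2^-1)) (qadd (qadd qone qi) (qmul (qreal (Num.sqrt 2)) qj)).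
Definition v4 : quat :=
  qmul (qreal (2^-1)) (qadd (qadd qone qi) (qmul (qreal (Num.sqrt 2)) qk)).

Definition inH (q : quat) : Prop :=
  exists a b c d : int,
    q = qadd (qadd (qzscale a v1) (qzscale b v2)) (qadd (qzscale c v3) (qzscale d v4)).

Definition unitH (u : quat) : Prop :=
  inH u /\ exists w, inH w /\ qmul u w = qone /\ qmul w u = qone.

Definition odd_norm (q : quat) : Prop :=
  exists k : int, qN q = qreal ((2 * k + 1)%:~R).

Definition in2H (q : quat) : Prop := exists h, inH h /\ q = qzscale 2 h.

End Quat.

(* In the basis v1, ..., v4 the norm of x1 v1 + x2 v2 + x3 v3 + x4 v4 is the
   integral quadratic form x1^2 + x2^2 + x3^2 + x4^2 + x3 x4 + (x3 + x4)(x1 + x2),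
   and b - u lies in 2 H_{1,2,2} exactly when the coordinates of b and u agree
   modulo 2.  The parity of the norm only depends on the coordinates modulo 2,
   and each of the twelve residue classes of odd norm contains an element of
   norm 1; such an element is a unit of H_{1,2,2}, its inverse being its
   conjugate, which again has integral coordinates. *)
From mathcomp Require Import all_boot all_order all_algebra.
From mathcomp Require Import ring.
Set Implicit Arguments.
Unset Strict Implicit.
Unset Printing Implicit Defensive.
Import GRing.Theory Num.Theory.
Local Open Scope ring_scope.

Definition hnorm (T : pzRingType) (a b c d : T) : T :=
  a * a + b * b + c * c + d * d + c * d + (c + d) * (a + b).

Lemma rmorph_hnorm (S T : pzRingType) (f : {rmorphism S -> T}) (a b c d : S) :
  f (hnorm a b c d) = hnorm (f a) (f b) (f c) (f d).
Proof. by rewrite /hnorm !(rmorphD, rmorphM). Qed.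

Lemma F2_case (r : 'F_2) : r = 0 \/ r = 1.
Proof. by case: r => [[|[|//]]] ? /=; [left | right]; apply: val_inj. Qed.

Lemma hnorm_F2_lift (r1 r2 r3 r4 : 'F_2) : hnorm r1 r2 r3 r4 = 1 ->
  exists y1 y2 y3 y4 : int, hnorm y1 y2 y3 y4 = 1 /\
    [/\ y1%:~R = r1, y2%:~R = r2, y3%:~R = r3 & y4%:~R = r4].
Proof.
case: (F2_case r1) (F2_case r2) (F2_case r3) (F2_case r4)
  => -> [] -> [] -> [] -> /eqP //= _;
  [ exists 0, 0, 0, 1 | exists 0, 0, 1, 0 | exists 0, 0, 1, (-1)
  | exists 0, 1, 0, 0 | exists 0, (-1), 0, 1 | exists 0, (-1), 1, 0
  | exists 1, 0, 0, 0 | exists (-1), 0, 0, 1 | exists (-1), 0, 1, 0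
  | exists (-1), (-1), 0, 1 | exists (-1), (-1), 1, 0 | exists (-1), (-1), 1, 1 ];
  (split; [|split]).
all: by apply/eqP.
Qed.

Lemma hnorm_odd_unit_congr (x1 x2 x3 x4 : int) :
  ~~ (2 %| hnorm x1 x2 x3 x4)%Z ->
  exists y1 y2 y3 y4 : int, hnorm y1 y2 y3 y4 = 1 /\
    [/\ (2 %| x1 - y1)%Z, (2 %| x2 - y2)%Z, (2 %| x3 - y3)%Z & (2 %| x4 - y4)%Z].
Proof.
have dvd2E := dvdz_pcharf (pchar_Fp (isT : prime 2)).
move=> odd_x.
have [|y1 [y2 [y3 [y4 [norm_y [e1 e2 e3 e4]]]]]] :=
  @hnorm_F2_lift x1%:~R x2%:~R x3%:~R x4%:~R.
  move: odd_x; rewrite dvd2E rmorph_hnorm; set h := hnorm _ _ _ _.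
  by case: (F2_case h) => ->.
exists y1, y2, y3, y4; split=> //.
by split; rewrite dvd2E intrB ?e1 ?e2 ?e3 ?e4 subrr.
Qed.

Section QuaternionOrder.
Variable R : rcfType.
Local Notation sqrt2 := (Num.sqrt (2 : R)).

Lemma qN_sum_sqr (p : quat R) :
  qN p = qreal (q0 p ^+ 2 + q1 p ^+ 2 + q2 p ^+ 2 + q3 p ^+ 2).
Proof.
case: p => *; rewrite /qN /qmul /qconj /qreal; cbn [q0 q1 q2 q3].
by congr Quat; ring.
Qed.

Lemma qmul_conjl (p : quat R) : qmul (qconj p) p = qN p.
Proof.
case: p => *; rewrite /qN /qmul /qconj; cbn [q0 q1 q2 q3].
by congr Quat; ring.
Qed.

Definition hcoord (a b c d : int) : quat R :=
  qadd (qadd (qzscale a (v1 R)) (qzscale b (v2 R)))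
       (qadd (qzscale c (v3 R)) (qzscale d (v4 R))).

Lemma qzscaleE (z : int) (p : quat R) :
  qzscale z p = Quat (z%:~R * q0 p) (z%:~R * q1 p) (z%:~R * q2 p) (z%:~R * q3 p).
Proof.
case: p => *; rewrite /qzscale /qmul /qreal; cbn [q0 q1 q2 q3].
by congr Quat; ring.
Qed.

Lemma v3E : v3 R = Quat (2^-1) (2^-1) (sqrt2 / 2) 0.
Proof.
rewrite /v3 /qmul /qadd /qone /qreal /qi /qj; cbn [q0 q1 q2 q3].
by congr Quat; field.
Qed.

Lemma v4E : v4 R = Quat (2^-1) (2^-1) 0 (sqrt2 / 2).
Proof.
rewrite /v4 /qmul /qadd /qone /qreal /qi /qk; cbn [q0 q1 q2 q3].
by congr Quat; field.
Qed.

Lemma hcoordE (a b c d : int) : hcoord a b c d =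
  Quat (a%:~R + (c%:~R + d%:~R) / 2) (b%:~R + (c%:~R + d%:~R) / 2)
       (c%:~R * sqrt2 / 2) (d%:~R * sqrt2 / 2).
Proof.
rewrite /hcoord !qzscaleE v3E v4E /v1 /v2 /qone /qi /qreal /qadd.
cbn [q0 q1 q2 q3].
by congr Quat; field.
Qed.

Lemma qN_hcoord (a b c d : int) :
  qN (hcoord a b c d) = qreal (hnorm a b c d)%:~R.
Proof.
rewrite qN_sum_sqr hcoordE rmorph_hnorm; cbn [q0 q1 q2 q3]; congr qreal.
by rewrite !exprMn sqr_sqrtr ?ler0n // /hnorm; field.
Qed.

Lemma qconj_hcoord (a b c d : int) :
  qconj (hcoord a b c d) = hcoord (a + c + d) (- b) (- c) (- d).
Proof.
rewrite !hcoordE /qconj; cbn [q0 q1 q2 q3].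
by rewrite !intrD !intrN; congr Quat; field.
Qed.

Lemma unitH_hcoord (a b c d : int) :
  hnorm a b c d = 1 -> unitH (hcoord a b c d).
Proof.
move=> norm1.
have normE : qN (hcoord a b c d) = qone R by rewrite qN_hcoord norm1.
split; first by exists a, b, c, d.
exists (qconj (hcoord a b c d)); rewrite qmul_conjl; split=> //.
by rewrite qconj_hcoord; exists (a + c + d), (- b), (- c), (- d).
Qed.

Lemma qsub_hcoord (x1 x2 x3 x4 y1 y2 y3 y4 : int) :
  qsub (hcoord x1 x2 x3 x4) (hcoord y1 y2 y3 y4) =
  hcoord (x1 - y1) (x2 - y2) (x3 - y3) (x4 - y4).
Proof.
rewrite !hcoordE /qsub /qadd /qopp; cbn [q0 q1 q2 q3].
by rewrite !intrB; congr Quat; field.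
Qed.

Lemma qzscale_hcoord (z a b c d : int) :
  qzscale z (hcoord a b c d) = hcoord (z * a) (z * b) (z * c) (z * d).
Proof.
rewrite !hcoordE /qzscale /qmul /qreal; cbn [q0 q1 q2 q3].
by rewrite !intrM; congr Quat; field.
Qed.

Lemma in2H_hcoord (a b c d : int) :
  (2 %| a)%Z -> (2 %| b)%Z -> (2 %| c)%Z -> (2 %| d)%Z -> in2H (hcoord a b c d).
Proof.
move=> /dvdzP[a' ->] /dvdzP[b' ->] /dvdzP[c' ->] /dvdzP[d' ->].
exists (hcoord a' b' c' d'); split; first by exists a', b', c', d'.
by rewrite qzscale_hcoord ![2 * _]mulrC.
Qed.

End QuaternionOrder.

Theorem lemma7 (R : rcfType) (b : quat R) :
  inH b -> odd_norm b ->
  exists u : quat R, unitH u /\ in2H (qsub b u).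
Proof.
move=> [x1 [x2 [x3 [x4 ->]]]] [k normb].
rewrite -/(hcoord R x1 x2 x3 x4) in normb *.
have odd_x : ~~ (2 %| hnorm x1 x2 x3 x4)%Z.
  move: normb; rewrite qN_hcoord => /(congr1 (@q0 R)) /intr_inj ->.
  by rewrite rpredDl ?dvdz_mulr.
have [y1 [y2 [y3 [y4 [norm_y [d1 d2 d3 d4]]]]]] := hnorm_odd_unit_congr odd_x.
exists (hcoord R y1 y2 y3 y4); split; first exact: unitH_hcoord.
by rewrite qsub_hcoord; apply: in2H_hcoord.
Qed.
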